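(* Fix $x>1$, let $p_1,p_2\ge n$, $p=p_1+p_2$, and let $0<\delta_n\ll1$. Let $$E_n=\left\{(x_1,\dots,x_n)\in\Delta_n:\ \tfrac{p_1}{p}(1-\delta_n)<x_1,\ x_{n-1}<\tfrac{p_1}{p}(1+\delta_n),\ \tfrac{p_1}{p}x<x_n<\tfrac{p_1}{p}(x+\delta_n)\right\},$$ where $\Delta_n=\{(x_1,\dots,x_n)\in[0,1]^n:x_1\le\dots\le x_n\}$. Set $\alpha_2=\frac12-\frac{\delta_n}{x-1}$, $\alpha_1=\frac12+\frac{\delta_n}{x-1}$ and $\bar x_i=\frac{px_i-p_1}{p_1(x-1)}$. Then for all $(x_1,\dots,x_n)\in E_n$, $$\prod_{i=1}^{n-1}(x_n-x_i)\le\left(\frac{p_1(x-1)}{p}\right)^{n-1}\exp\left\{(n+o(n))\frac{px_n-p_1x}{p_1(x-1)}-\sum_{i=1}^{n-1}\bar x_i-\alpha_2\sum_{i=1}^{n-1}\bar x_i^2\right\}$$ and $$\prod_{i=1}^{n-1}(x_n-x_i)\ge\left(\frac{p_1(x-1)}{p}\right)^{n-1}\exp\left\{-\sum_{i=1}^{n-1}\bar x_i-\alpha_1\sum_{i=1}^{n-1}\bar x_i^2\right\}.$$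
   Context: $\delta_n\ll1$ means $\delta_n\to0$ as $n\to\infty$. In the upper bound, $n+o(n)$ denotes a quantity whose ratio to $n$ tends to $1$ as $n\to\infty$ (the bound holds for $n$ large enough). *)

From HB Require Import structures.
From mathcomp Require Import all_boot all_order all_algebra.
From mathcomp Require Import all_classical all_reals all_analysis.
Set Implicit Arguments. Unset Strict Implicit. Unset Printing Implicit Defensive.
Import Order.TTheory GRing.Theory Num.Theory.
Local Open Scope ring_scope.

(* Points of R^n are encoded as xs : nat -> R, using coordinates xs 1, ..., xs n
   (the values at other indices are irrelevant). *)

Definition in_Delta (R : realType) (n : nat) (xs : nat -> R) : Prop :=
  (forall i : nat, (1 <= i <= n)%N -> 0 <= xs i <= 1) /\
  (forall i : nat, (1 <= i < n)%N -> xs i <= xs i.+1).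

Definition in_E (R : realType) (n p1 p2 : nat) (x d : R) (xs : nat -> R) : Prop :=
  let q := (p1%:R / (p1 + p2)%:R : R) in
  [/\ in_Delta n xs,
      q * (1 - d) < xs 1%N,
      xs (n - 1)%N < q * (1 + d),
      q * x < xs n
    & xs n < q * (x + d)].

Definition xbar (R : realType) (p1 p2 : nat) (x xi : R) : R :=
  ((p1 + p2)%:R * xi - p1%:R) / (p1%:R * (x - 1)).

From HB Require Import structures.
From mathcomp Require Import all_boot all_order all_algebra.
From mathcomp Require Import all_classical all_reals all_analysis.
From mathcomp Require Import zify ring lra.
Set Implicit Arguments. Unset Strict Implicit. Unset Printing Implicit Defensive.
Import Order.TTheory GRing.Theory Num.Theory.
Import numFieldNormedType.Exports.
Local Open Scope classical_set_scope.
Local Open Scope ring_scope.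

(* With t_i := xbar x_i and y := xbar x_n - 1 one has x_n - x_i = C (1 + y - t_i),
   where C = p1 (x - 1) / p, and on E_n both |t_i| and y are below
   e := delta_n / (x - 1).  The cubic Taylor lower bound for exp gives, for
   |t| < e <= 1/10 and y >= 0,
     exp (- t - (1/2 + e) t^2) <= 1 + y - t <= exp (y (1 + 2e) - t - (1/2 - e) t^2),
   and multiplying over i < n gives both bounds, with o(n) = 2 n e. *)

Section ExpTaylor.
Variable R : realType.
Implicit Types w : R.

Lemma MVT_from0 (f : R -> R) df w :
  (forall z, is_derive z (1 : R) f (df z)) -> f 0 = 0 -> w != 0 ->
  exists2 c, 0 < c * w & f w = df c * w.
Proof.
move=> f_df f0 w_neq0.
have f_cont a b : {within `[a, b], continuous f}.
  by apply: derivable_within_continuous => z _; exact: ex_derive.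
case: (ltgtP w 0) w_neq0 => // w_sign _.
- have [c /[!in_itv]/= /andP[c_gt_w c_lt0]] := MVT w_sign (fun z _ => f_df z) (f_cont _ _).
  rewrite f0 => f_mvt; exists c; first by rewrite -mulrNN mulr_gt0 ?oppr_gt0.
  by apply: oppr_inj; rewrite -sub0r f_mvt sub0r mulrN.
- have [c /[!in_itv]/= /andP[c_gt0 c_lt_w]] := MVT w_sign (fun z _ => f_df z) (f_cont _ _).
  rewrite f0 !subr0 => ->; exists c => //.
  by rewrite mulr_gt0 // (lt_trans c_gt0).
Qed.

Lemma expR_quadratic_remainder_sign w : 0 <= w * (expR w - 1 - w - w ^+ 2 / 2).
Proof.
have [->|w_neq0] := eqVneq w 0; first by rewrite mul0r.
pose f (z : R) := expR z - 1 - z - z ^+ 2 / 2.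
have f_df z : is_derive z (1 : R) f (expR z - 1 - z).
  rewrite /f; apply: is_derive_eq.
  by rewrite /GRing.scale /= !mulr1 subr0 !mulr0 add0r; lra.
have f0 : f 0 = 0 by rewrite /f expR0 expr0n /= mul0r !subr0 subrr.
rewrite -/(f w); have [c cw_gt0 ->] := MVT_from0 f_df f0 w_neq0.
have := expR_ge1Dx c; nra.
Qed.

Definition taylor3_expR w := 1 + w + w ^+ 2 / 2 + w ^+ 3 / 6.

Lemma taylor3_expR_le w : taylor3_expR w <= expR w.
Proof.
rewrite -subr_ge0; have [->|w_neq0] := eqVneq w 0.
  by rewrite /taylor3_expR expR0 !expr0n /= !mul0r !addr0 subrr.
pose f (z : R) := expR z - taylor3_expR z.
have f_df z : is_derive z (1 : R) f (expR z - 1 - z - z ^+ 2 / 2).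
  rewrite /f /taylor3_expR; apply: is_derive_eq.
  by rewrite /GRing.scale /= !mulr1 !mulr0 !add0r expr2; field.
have f0 : f 0 = 0 by rewrite /f /taylor3_expR expR0 !expr0n /= !mul0r !addr0 subrr.
rewrite -/(f w); have [c cw_gt0 ->] := MVT_from0 f_df f0 w_neq0.
have := expR_quadratic_remainder_sign c.
have c2_gt0 : 0 < c * c by nra.
nra.
Qed.

End ExpTaylor.

Section LogOneSubBounds.
Variables (R : realType) (e t : R).

(* In the next two lemmas the difference of the two sides is exactly
   t^2 (e + t k + (c t)^2 / 2) for some k in [-1, 1], hence nonnegative as |t| < e. *)
Lemma one_sub_le_taylor3_expR : 0 < e <= 10^-1 -> - e < t < e ->
  1 - t <= taylor3_expR (- t - (2^-1 - e) * t ^+ 2).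
Proof.
move=> /andP[e_gt0 e_small] /andP[t_gt t_lt].
set a := 2^-1 - e; set u := 1 + a * t.
have a_bounds : 2/5 <= a <= 2^-1 by rewrite /a; lra.
have u_bounds : 9/10 <= u <= 11/10 by rewrite /u; nra.
have u3_bounds : 0 <= u ^+ 3 <= 7/5 by rewrite !exprS expr0 mulr1; nra.
set k := a - u ^+ 3 / 6.
have k_bounds : 0 <= k <= 1 by rewrite /k; lra.
have -> : taylor3_expR (- t - a * t ^+ 2) = 1 - t + t ^+ 2 * (e + t * k + (a * t) ^+ 2 / 2).
  by rewrite /taylor3_expR /k /u /a; field.
rewrite lerDl mulr_ge0 ?sqr_ge0 //.
have := sqr_ge0 (a * t); nra.
Qed.

Lemma one_le_mul_taylor3_expR : 0 < e <= 10^-1 -> - e < t < e ->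
  1 <= (1 - t) * taylor3_expR (t + (2^-1 + e) * t ^+ 2).
Proof.
move=> /andP[e_gt0 e_small] /andP[t_gt t_lt].
set b := 2^-1 + e; set u := 1 + b * t.
have b_bounds : 2^-1 <= b <= 3/5 by rewrite /b; lra.
have u_bounds : 9/10 <= u <= 11/10 by rewrite /u; nra.
have u2_bounds : 81/100 <= u * u <= 121/100 by nra.
have ut_bounds : 81/100 <= u * (1 - t) <= 121/100 by nra.
set m := u ^+ 2 * (u * (1 - t) / 6 - 2^-1).
have m_bounds : -1 <= m <= 0 by rewrite /m expr2; nra.
have -> : (1 - t) * taylor3_expR (t + b * t ^+ 2) = 1 + t ^+ 2 * (e + t * m + (b * t) ^+ 2 / 2).
  by rewrite /taylor3_expR /m /u /b; field.
rewrite lerDl mulr_ge0 ?sqr_ge0 //.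
have := sqr_ge0 (b * t); nra.
Qed.

Lemma one_sub_le_expR : 0 < e <= 10^-1 -> - e < t < e ->
  1 - t <= expR (- t - (2^-1 - e) * t ^+ 2).
Proof.
move=> e_bounds t_bounds.
exact: le_trans (one_sub_le_taylor3_expR e_bounds t_bounds) (taylor3_expR_le _).
Qed.

Lemma expR_le_one_sub : 0 < e <= 10^-1 -> - e < t < e ->
  expR (- t - (2^-1 + e) * t ^+ 2) <= 1 - t.
Proof.
move=> e_bounds t_bounds.
set v := t + (2^-1 + e) * t ^+ 2.
have -> : - t - (2^-1 + e) * t ^+ 2 = - v by rewrite /v; ring.
have T_ge1 := one_le_mul_taylor3_expR e_bounds t_bounds; rewrite -/v in T_ge1.
have t_lt1 : t < 1 by move: e_bounds t_bounds => /andP[_ ?] /andP[_ ?]; lra.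
have T_gt0 : 0 < taylor3_expR v by nra.
rewrite expRN (@le_trans _ _ (taylor3_expR v)^-1) //.
  by rewrite lef_pV2 ?posrE ?expR_gt0 ?taylor3_expR_le.
by rewrite -[_^-1]mul1r ler_pdivrMr.
Qed.

Lemma one_add_sub_le_expR y : 0 < e <= 10^-1 -> - e < t < e ->
  0 <= y ->
  1 + y - t <= expR (y * (1 + 2 * e) - t - (2^-1 - e) * t ^+ 2).
Proof.
move=> e_bounds t_bounds y_ge0.
have expB_ge := one_sub_le_expR e_bounds t_bounds.
move: e_bounds t_bounds => /andP[e_gt0 e_small] /andP[t_gt t_lt].
rewrite -[_ - t - _]addrA expRD (@le_trans _ _ ((1 + y * (1 + 2 * e)) * (1 - t))) //.
  have : 0 <= y * (2 * e - t - 2 * e * t) by rewrite mulr_ge0 //; nra.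
  nra.
by apply: ler_pM; rewrite ?expR_ge1Dx //; nra.
Qed.

End LogOneSubBounds.

Section ProductBounds.
Variables (R : realType) (e y : R) (t : nat -> R) (m n : nat).

Lemma prod_expR_quadratic (c a : R) :
  \prod_(m <= i < n) expR (c - t i - a * t i ^+ 2) =
  expR ((n - m)%:R * c - \sum_(m <= i < n) t i - a * \sum_(m <= i < n) t i ^+ 2).
Proof. by rewrite -expR_sum !big_split /= sumr_const_nat !sumrN mulr_sumr mulr_natl. Qed.

Hypotheses (e_bounds : 0 < e <= 10^-1) (y_ge0 : 0 <= y)
  (t_bounds : forall i, (m <= i < n)%N -> - e < t i < e).

Lemma prod_one_add_sub_le_expR :
  \prod_(m <= i < n) (1 + y - t i) <=
  expR ((n - m)%:R * (y * (1 + 2 * e)) - \sum_(m <= i < n) t i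
        - (2^-1 - e) * \sum_(m <= i < n) t i ^+ 2).
Proof.
rewrite -prod_expR_quadratic big_nat_cond [leRHS]big_nat_cond.
apply: ler_prod => i /andP[/t_bounds t_bd _].
rewrite one_add_sub_le_expR // andbT.
move: e_bounds t_bd y_ge0 => /andP[_ ?] /andP[_ ?] ?; lra.
Qed.

Lemma expR_le_prod_one_add_sub :
  expR (- \sum_(m <= i < n) t i - (2^-1 + e) * \sum_(m <= i < n) t i ^+ 2) <=
  \prod_(m <= i < n) (1 + y - t i).
Proof.
have -> : - \sum_(m <= i < n) t i = (n - m)%:R * 0 - \sum_(m <= i < n) t i.
  by rewrite mulr0 sub0r.
rewrite -prod_expR_quadratic big_nat_cond [leRHS]big_nat_cond.
apply: ler_prod => i /andP[/t_bounds t_bd _].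
rewrite expR_ge0 sub0r (le_trans (expR_le_one_sub e_bounds t_bd)) //.
by rewrite lerD2r lerDl.
Qed.

End ProductBounds.

Section Xbar.
Variables (R : realType) (p1 p2 : nat) (x : R).
Hypotheses (p1_gt0 : (0 < p1)%N) (x_gt1 : 1 < x).

Let p1_neq0 : p1%:R != 0 :> R. Proof. by rewrite pnatr_eq0 -lt0n. Qed.
Let p_gt0 : 0 < (p1 + p2)%:R :> R. Proof. by rewrite ltr0n addn_gt0 p1_gt0. Qed.
Let x1_gt0 : 0 < x - 1. Proof. by rewrite subr_gt0. Qed.

Lemma xbar_scaled s : xbar p1 p2 x (p1%:R / (p1 + p2)%:R * s) = (s - 1) / (x - 1).
Proof. by rewrite /xbar; field; rewrite -natrD p1_neq0 !gt_eqF. Qed.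

Lemma ltr_xbar : {mono xbar p1 p2 x : u v / u < v}.
Proof.
move=> u v; rewrite /xbar ltr_pM2r ?invr_gt0 ?mulr_gt0 ?ltr0n //.
by rewrite ltrD2r ltr_pM2l.
Qed.

Lemma ler_xbar : {mono xbar p1 p2 x : u v / u <= v}.
Proof. by apply: le_mono => u v; rewrite ltr_xbar. Qed.

Lemma sub_eq_mul_xbar_sub u v :
  v - u = p1%:R * (x - 1) / (p1 + p2)%:R * (xbar p1 p2 x v - xbar p1 p2 x u).
Proof. by rewrite /xbar; field; rewrite -natrD p1_neq0 !gt_eqF. Qed.

Lemma xbar_sub1 v :
  xbar p1 p2 x v - 1 = ((p1 + p2)%:R * v - p1%:R * x) / (p1%:R * (x - 1)).
Proof. by rewrite /xbar; field; rewrite p1_neq0 gt_eqF. Qed.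

Lemma in_E_xbar_bounds n d xs : in_E n p1 p2 x d xs ->
  (forall i, (1 <= i < n)%N -> - (d / (x - 1)) < xbar p1 p2 x (xs i) < d / (x - 1)) /\
  0 < xbar p1 p2 x (xs n) - 1 < d / (x - 1).
Proof.
case=> [[_ xs_incr] lt_x1 lt_xn1 gt_xn lt_xn].
rewrite -ltr_xbar xbar_scaled addrAC subrr add0r mulNr in lt_x1.
rewrite -ltr_xbar xbar_scaled addrAC subrr add0r in lt_xn1.
rewrite -ltr_xbar xbar_scaled divff ?gt_eqF // in gt_xn.
rewrite -ltr_xbar xbar_scaled addrAC mulrDl divff ?gt_eqF // in lt_xn.
have xs_homo : {in [pred i | (1 <= i <= n)%N] &, {homo xs : i j / (i <= j)%N >-> i <= j}}.
  apply: homo_leq_in => [//|y u z|i j|i]; first exact: le_trans.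
    by rewrite !inE => /andP[? ?] /andP[? ?] k /andP[? ?]; apply/andP; split; lia.
  by rewrite !inE => /andP[i_ge1 _] /andP[_ i_lt]; apply: xs_incr; rewrite i_ge1 i_lt.
split; last by rewrite subr_gt0 gt_xn ltrBlDl lt_xn.
move=> i /andP[i_ge1 i_lt].
have : xbar p1 p2 x (xs 1%N) <= xbar p1 p2 x (xs i) <= xbar p1 p2 x (xs (n - 1)%N).
  by rewrite !ler_xbar !xs_homo ?inE; lia.
move: lt_x1 lt_xn1; lra.
Qed.

End Xbar.

Theorem lemma6 (R : realType) (x : R) (p1 p2 : nat -> nat) (delta : nat -> R) :
  1 < x ->
  (forall n : nat, (n <= p1 n)%N /\ (n <= p2 n)%N) ->
  (forall n : nat, 0 < delta n) ->
  delta @ \oo --> (0 : R) ->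
  exists o : nat -> R,
    (fun n : nat => o n / n%:R) @ \oo --> (0 : R) /\
    exists N : nat, forall n : nat, (N <= n)%N ->
      forall xs : nat -> R, in_E n (p1 n) (p2 n) x (delta n) xs ->
      let p := (p1 n + p2 n)%N in
      let C := (p1 n)%:R * (x - 1) / p%:R in
      let a2 := 2^-1 - delta n / (x - 1) in
      let a1 := 2^-1 + delta n / (x - 1) in
      let S1 := \sum_(1 <= i < n) xbar (p1 n) (p2 n) x (xs i) in
      let S2 := \sum_(1 <= i < n) (xbar (p1 n) (p2 n) x (xs i)) ^+ 2 in
      let P := \prod_(1 <= i < n) (xs n - xs i) in
      P <= C ^+ (n - 1) *
             expR ((n%:R + o n) * ((p%:R * xs n - (p1 n)%:R * x)
                                    / ((p1 n)%:R * (x - 1)))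
                   - S1 - a2 * S2)
      /\
      C ^+ (n - 1) * expR (- S1 - a1 * S2) <= P.
Proof.
move=> x_gt1 p_ge_n delta_gt0 delta_to0.
pose e n := delta n / (x - 1).
have e_to0 : e @ \oo --> (0 : R).
  by rewrite -(mul0r (x - 1)^-1); apply: cvgMl.
exists (fun n => 2 * n%:R * e n); split.
  rewrite -(mulr0 2); apply: cvg_trans (cvgMr (a := 2) e_to0); apply: near_eq_cvg.
  near=> n; rewrite mulrAC mulfK // pnatr_eq0 -lt0n; near: n; exact: nbhs_infty_gt.
have tenth_gt0 : 0 < 10^-1 :> R by rewrite invr_gt0 ltr0n.
have [N _ e_small] := cvgr0_norm_le _ e_to0 _ tenth_gt0.
exists N.+1 => n n_gt xs xs_E p C a2 a1 S1 S2 P.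
have p1_gt0 : (0 < p1 n)%N by have := (p_ge_n n).1; lia.
have e_gt0 : 0 < e n by rewrite divr_gt0 ?subr_gt0.
have e_bounds : 0 < e n <= 10^-1.
  by rewrite e_gt0 -(gtr0_norm e_gt0) e_small //= ltnW.
have [t_bounds y_bounds] := in_E_xbar_bounds p1_gt0 x_gt1 xs_E.
set y := xbar (p1 n) (p2 n) x (xs n) - 1 in y_bounds.
have y_ge0 : 0 <= y by case/andP: y_bounds => /ltW.
have P_eq : P = C ^+ (n - 1) * \prod_(1 <= i < n) (1 + y - xbar (p1 n) (p2 n) x (xs i)).
  rewrite /P (eq_big_nat _ _ (fun i _ => sub_eq_mul_xbar_sub (p2 n) p1_gt0 x_gt1 (xs i) (xs n))).
  by rewrite big_split /= prodr_const_nat /y -addrCA subrr addr0.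
have C_ge0 : 0 <= C ^+ (n - 1) by rewrite exprn_ge0 // divr_ge0 // mulr_ge0 // subr_ge0 ltW.
rewrite -(xbar_sub1 (p2 n) p1_gt0 x_gt1) -/y P_eq; split; apply: ler_wpM2l => //.
  apply: le_trans (prod_one_add_sub_le_expR e_bounds y_ge0 t_bounds) _.
  by rewrite ler_expR !lerD2r natrB; [nra | lia].
exact: expR_le_prod_one_add_sub e_bounds y_ge0 t_bounds.
Unshelve. all: by end_near.
Qed.
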